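(* Let $\mathcal{P}=(\{\mathcal{E}_k:k\in K\},\{M_0,M_1\})$ be a concurrent quantum program on a Hilbert space $\mathcal{H}$ of finite dimension $d$, with initial density operator $\rho_0$. Then $\mathcal{P}$ with input $\rho_0$ terminates in the fair schedule $F$ if and only if it terminates in the schedule $\Pi^\omega$.
   Context: $\mathcal{H}$ is a complex Hilbert space of finite dimension $d\ge1$. A super-operator is a completely positive trace-non-increasing linear map on operators on $\mathcal{H}$. A concurrent quantum program is $\mathcal{P}=(\{\mathcal{E}_k:k\in K\},\{M_0,M_1\})$ with $K=\{1,\dots,m\}$, each $\mathcal{E}_k$ a trace-preserving super-operator, and $M_0^\dagger M_0+M_1^\dagger M_1=I$. $\mathcal{F}_k(\rho)=\mathcal{E}_k(M_1\rho M_1^\dagger)$; for a finite string $f=s_1\cdots s_n$ over $K$, $\mathcal{F}_f=\mathcal{F}_{s_n}\circ\cdots\circ\mathcal{F}_{s_1}$. $S=K^\omega$; for $s\in S$, $s[n]$ is its prefix of length $n$. $\mathcal{P}$ with input $\rho_0$ terminates for $s$ if $\mathcal{F}_{s[n]}(\rho_0)=0$ for some $n\ge1$, and terminates in a schedule $A\subseteq S$ if it terminates for every $s\in A$. An infinite path $s$ is fair if every $k\in K$ occurs infinitely often in $s$; $F$ is the set of fair paths. $P_K$ is the set of permutations of $K$, viewed as strings $s_1s_2\cdots s_m$ in which each element of $K$ occurs exactly once. $\Pi=\{s_1\sigma_1s_2\sigma_2\cdots\sigma_{m-1}s_m:\ s_1\cdots s_m\in P_K,\ \sigma_i\in K^*,\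 |\sigma_i|<d\text{ for }1\le i<m\}$, and $\Pi^\omega$ is the set of infinite paths that are concatenations of infinitely many strings from $\Pi$. *)

From HB Require Import structures.
From mathcomp Require Import all_boot all_order all_algebra.
Set Implicit Arguments. Unset Strict Implicit. Unset Printing Implicit Defensive.
Import Order.TTheory GRing.Theory Num.Theory.
Local Open Scope ring_scope.

Section QProg.
Variable C : numClosedFieldType.

Definition adjmx (n : nat) (A : 'M[C]_n) : 'M[C]_n := (map_mx Num.conj A)^T.

Definition psd_f (T : finType) (A : T -> T -> C) : Prop :=
  forall v : T -> C,
    0 <= \sum_(i : T) \sum_(j : T) Num.conj (v i) * A i j * v j.

Definition psdmx (n : nat) (A : 'M[C]_n) : Prop := psd_f (fun i j => A i j).

Definition density (d : nat) (rho : 'M[C]_d) : Prop := psdmx rho /\ \tr rho = 1.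

(* complete positivity: id_n (x) E maps positive operators on C^n (x) H
   (written as n x n block matrices of d x d blocks) to positive operators *)
Definition completely_positive (d : nat) (E : 'M[C]_d -> 'M[C]_d) : Prop :=
  forall (n : nat) (X : 'I_n -> 'I_n -> 'M[C]_d),
    psd_f (fun a b : 'I_n * 'I_d => X a.1 b.1 a.2 b.2) ->
    psd_f (fun a b : 'I_n * 'I_d => E (X a.1 b.1) a.2 b.2).

Definition trace_nonincreasing (d : nat) (E : 'M[C]_d -> 'M[C]_d) : Prop :=
  forall rho : 'M[C]_d, psdmx rho -> \tr (E rho) <= \tr rho.

Definition trace_preserving (d : nat) (E : 'M[C]_d -> 'M[C]_d) : Prop :=
  forall A : 'M[C]_d, \tr (E A) = \tr A.

Definition superop (d : nat) (E : {linear 'M[C]_d -> 'M[C]_d}) : Prop :=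
  completely_positive E /\ trace_nonincreasing E.

Definition Fk (d m : nat) (E : 'I_m -> 'M[C]_d -> 'M[C]_d) (M1 : 'M[C]_d)
  (k : 'I_m) (rho : 'M[C]_d) : 'M[C]_d := E k (M1 *m rho *m adjmx M1).

Definition Fstr (d m : nat) (E : 'I_m -> 'M[C]_d -> 'M[C]_d) (M1 : 'M[C]_d)
  (f : seq 'I_m) (rho : 'M[C]_d) : 'M[C]_d :=
  foldl (fun r k => Fk E M1 k r) rho f.

Definition prefix (m : nat) (s : nat -> 'I_m) (n : nat) : seq 'I_m :=
  [seq s i | i <- iota 0 n].

Definition terminates_for (d m : nat) (E : 'I_m -> 'M[C]_d -> 'M[C]_d)
  (M1 rho0 : 'M[C]_d) (s : nat -> 'I_m) : Prop :=
  exists n : nat, (1 <= n)%N /\ Fstr E M1 (prefix s n) rho0 = 0.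

Definition terminates_in (d m : nat) (E : 'I_m -> 'M[C]_d -> 'M[C]_d)
  (M1 rho0 : 'M[C]_d) (A : (nat -> 'I_m) -> Prop) : Prop :=
  forall s, A s -> terminates_for E M1 rho0 s.

End QProg.

Definition fair (m : nat) (s : nat -> 'I_m) : Prop :=
  forall (k : 'I_m) (N : nat), exists n : nat, (N <= n)%N /\ s n = k.

(* s_1 sigma_1 s_2 sigma_2 ... sigma_{m-1} s_m *)
Fixpoint interleave (T : Type) (p : seq T) (sig : seq (seq T)) : seq T :=
  match p, sig with
  | [::], _ => [::]
  | x :: xs, [::] => x :: xs
  | x :: xs, σ :: σs =>
      match xs with
      | [::] => [:: x]
      | _ => x :: σ ++ interleave xs σs
      end
  end.

Definition inPi (d m : nat) (w : seq 'I_m) : Prop :=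
  exists (p : seq 'I_m) (sig : seq (seq 'I_m)),
    [/\ perm_eq p (enum 'I_m), size sig = m.-1,
        all (fun σ => size σ < d)%N sig & w = interleave p sig].

(* Pi^omega: s is the concatenation of infinitely many strings of Pi,
   the i-th one occupying positions c i, ..., c (i+1) - 1 *)
Definition inPiomega (d m : nat) (s : nat -> 'I_m) : Prop :=
  exists c : nat -> nat,
    c 0 = 0%N /\
    forall i : nat, (c i < c i.+1)%N /\
      inPi d [seq s j | j <- iota (c i) (c i.+1 - c i)].

(* Since Pi^omega is contained in F (each block of Pi uses every letter), one
   direction is immediate. Conversely, given a fair path s along which rho0
   survives (no prefix annihilates it), we build a path of Pi^omega along which
   rho0 survives. The key fact is a gap lemma ([short_witness]): if some F_tau Y
   survives along t, then so does F_w Y for a word w with |w| < d. It is proved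
   by comparing positive matrices up to a constant ([dominated]): the matrices
   reach j ~ sum_{|w| <= j} F_w Y form a chain for this preorder whose classes
   are determined by the row space, so the chain stabilizes before step d. *)

From Pilot Require Import Defs.
From HB Require Import structures.
From mathcomp Require Import all_boot all_order all_algebra.
From mathcomp Require Import sesquilinear spectral ring.
From Stdlib Require Import Classical IndefiniteDescription.
From mathcomp Require Import zify.
Set Implicit Arguments. Unset Strict Implicit. Unset Printing Implicit Defensive.
Import Order.TTheory GRing.Theory Num.Theory.
Local Open Scope ring_scope.
Local Open Scope sesquilinear_scope.
Local Notation prefix := Defs.prefix.

Section PositiveMatrices.
Variable C : numClosedFieldType.
Variable d : nat.
Implicit Types (A B : 'M[C]_d) (x y : 'cV[C]_d).

Definition form A x y : C := (x^t* *m A *m y) 0 0.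
Definition qform A x : C := form A x x.

Lemma formE A x y : form A x y = \sum_i \sum_j (x i 0)^* * A i j * y j 0.
Proof.
rewrite /form mxE exchange_big /=; apply: eq_bigr => i _.
by rewrite mxE mulr_suml; apply: eq_bigr => j _; rewrite !mxE.
Qed.

Lemma psdP A : psdmx A <-> forall x, 0 <= qform A x.
Proof.
split=> [hA x | h v]; first by rewrite /qform formE; exact: (hA (fun i => x i 0)).
by have := h (\col_i v i); rewrite /qform formE; under eq_bigr do under eq_bigr do rewrite !mxE.
Qed.

Lemma formDl A x y z : form A (x + y) z = form A x z + form A y z.
Proof. by rewrite /form linearD /= map_mxD !mulmxDl mxE. Qed.
Lemma formDr A x y z : form A z (x + y) = form A z x + form A z y.
Proof. by rewrite /form !mulmxDr mxE. Qed.
Lemma formZl A a x y : form A (a *: x) y = a^* * form A x y.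
Proof.
rewrite /form; have -> : (a *: x)^t* = a^* *: x^t*.
  by apply/matrixP => i j; rewrite !mxE rmorphM.
by rewrite -!scalemxAl mxE.
Qed.
Lemma formZr A a x y : form A x (a *: y) = a * form A x y.
Proof. by rewrite /form -!scalemxAr mxE. Qed.
Lemma form_addmx A B x y : form (A + B) x y = form A x y + form B x y.
Proof. by rewrite /form mulmxDr mulmxDl mxE. Qed.
Lemma form_scalemx c A x y : form (c *: A) x y = c * form A x y.
Proof. by rewrite /form -scalemxAr -scalemxAl mxE. Qed.
Lemma form_oppmx A x y : form (- A) x y = - form A x y.
Proof. by rewrite -scaleN1r form_scalemx mulN1r. Qed.

Lemma form_cong (M : 'M[C]_d) A x y :
  form (M^t* *m A *m M) x y = form A (M *m x) (M *m y).
Proof. by rewrite /form trmx_mul map_mxM !mulmxA. Qed.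

Definition evec (i : 'I_d) : 'cV[C]_d := delta_mx i 0.

Lemma mulmx_evec A i k : (A *m evec k) i 0 = A i k.
Proof.
rewrite !mxE (bigD1 k) //= big1 => [|j jk]; last by rewrite !mxE (negbTE jk) mulr0.
by rewrite !mxE !eqxx mulr1 addr0.
Qed.

Lemma form_evec A i j : form A (evec i) (evec j) = A i j.
Proof.
rewrite /form -mulmxA mxE (bigD1 i) //= big1 => [|k ki]; last first.
  by rewrite !mxE (negbTE ki) /= rmorph0 mul0r.
by rewrite !mxE eqxx /= rmorph1 mul1r addr0 -(mulmx_evec A i j) mxE.
Qed.

(* A positive matrix is hermitian: polarize with x = e_i + e_j and x = e_i + 'i e_j. *)
Lemma psd_herm A : psdmx A -> forall i j, A j i = (A i j)^*.
Proof.
move/psdP=> hA i j; have realq x : (qform A x)^* = qform A x.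
  exact/conj_Creal/ger0_real/hA.
have := realq (evec i + evec j); have := realq (evec i + 'i *: evec j).
have := realq (evec i); have := realq (evec j).
rewrite /qform !formDl !formDr !formZl !formZr !form_evec conjCi.
set a := A i j; set b := A j i; set p := A i i; set q := A j j.
rewrite !rmorphD !rmorphM /= !rmorphN /= ?conjCi => -> -> hIm hRe.
move/eqP: hIm; rewrite -subr_eq0 => /eqP hIm.
move/eqP: hRe; rewrite -subr_eq0 => /eqP hRe.
have sum_real : a^* + b^* - (a + b) = 0 by rewrite -hRe; ring.
have diff_imag : 'i * ((b^* - a^*) - (a - b)) = 0 by rewrite -hIm; ring.
move/eqP: diff_imag; rewrite mulf_eq0 (negbTE (neq0Ci C)) /= => /eqP diff_imag.
have two_neq0 : (2%:R : C) != 0 by rewrite pnatr_eq0.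
apply: (mulfI two_neq0); apply/eqP; rewrite -subr_eq0.
have -> : 2%:R * b - 2%:R * a^* = (b^* - a^* - (a - b)) - (a^* + b^* - (a + b)) by ring.
by rewrite diff_imag sum_real subr0.
Qed.

Lemma psd_hermsym A : psdmx A -> A \is hermsymmx.
Proof.
move=> hA; apply/is_hermitianmxP; rewrite expr0 scale1r.
by apply/matrixP => i j; rewrite !mxE (psd_herm hA).
Qed.

Local Notation U A := (spectralmx A).
Local Notation D A := (spectral_diag A).

Lemma spectral_mulUUt A : U A *m (U A)^t* = 1%:M.
Proof. exact/unitarymxP/spectral_unitarymx. Qed.
Lemma spectral_mulUtU A : (U A)^t* *m U A = 1%:M.
Proof. exact: mulmx1C (spectral_mulUUt A). Qed.

Lemma psd_spectral A : psdmx A -> A = (U A)^t* *m diag_mx (D A) *m U A.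
Proof.
move=> hA; have /hermitian_normalmx/orthomx_spectralP e := psd_hermsym hA.
by rewrite -invmx_unitary ?spectral_unitarymx.
Qed.

Lemma qform_diag (v : 'rV[C]_d) x :
  qform (diag_mx v) x = \sum_k v 0 k * ((x k 0)^* * x k 0).
Proof.
rewrite /qform formE; apply: eq_bigr => i _.
rewrite (bigD1 i) //= big1 => [|j ji]; last by rewrite !mxE eq_sym (negbTE ji) mulr0n mulr0 mul0r.
by rewrite !mxE eqxx mulr1n addr0 mulrCA mulrA.
Qed.

Lemma normsq_ge0 (z : C) : 0 <= z^* * z.
Proof. by rewrite -normCKC exprn_ge0. Qed.

Lemma psd_spectral_ge0 A k : psdmx A -> 0 <= D A 0 k.
Proof.
move=> hA; have /psdP/(_ ((U A)^t* *m evec k)) := hA.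
rewrite /qform {1}(psd_spectral hA) form_cong mulmxA spectral_mulUUt mul1mx.
by rewrite form_evec mxE eqxx mulr1n.
Qed.

Lemma diag_mul_eq0 (v : 'rV[C]_d) x :
  (forall k, v 0 k * ((x k 0)^* * x k 0) = 0) -> diag_mx v *m x = 0.
Proof.
move=> hv; apply/matrixP => k l; rewrite !mxE (bigD1 k) //= big1 => [|j jk]; last first.
  by rewrite !mxE eq_sym (negbTE jk) mulr0n mul0r.
rewrite !mxE eqxx mulr1n addr0 ord1.
have /eqP := hv k; rewrite mulf_eq0 => /orP[/eqP->|]; first by rewrite mul0r.
by rewrite mulf_eq0 conjC_eq0 orbb => /eqP->; rewrite mulr0.
Qed.

Lemma psd_qform_eq0 A x : psdmx A -> qform A x = 0 -> A *m x = 0.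
Proof.
move=> hA; rewrite /qform {1}(psd_spectral hA) form_cong -/(qform _ _) qform_diag.
move=> /eqP; rewrite psumr_eq0 => [/allP hall|k _]; last first.
  by apply: mulr_ge0; [exact: psd_spectral_ge0 | exact: normsq_ge0].
have e : diag_mx (D A) *m (U A *m x) = 0.
  by apply: diag_mul_eq0 => k; apply/eqP; have := hall k (mem_index_enum _).
by rewrite (psd_spectral hA) -!mulmxA e !mulmx0.
Qed.

Lemma psd0 : psdmx (0 : 'M[C]_d).
Proof.
by apply/psdP => x; rewrite /qform /form mulmx0 mul0mx mxE.
Qed.
Lemma psdD A B : psdmx A -> psdmx B -> psdmx (A + B).
Proof.
by move=> /psdP hA /psdP hB; apply/psdP => x; rewrite /qform form_addmx addr_ge0 ?hA ?hB.
Qed.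
Lemma psdZ c A : 0 <= c -> psdmx A -> psdmx (c *: A).
Proof. by move=> c0 /psdP hA; apply/psdP => x; rewrite /qform form_scalemx mulr_ge0 ?hA. Qed.
Lemma psd_sum (I : Type) (r : seq I) (P : pred I) (G : I -> 'M[C]_d) :
  (forall i, psdmx (G i)) -> psdmx (\sum_(i <- r | P i) G i).
Proof.
move=> hG; elim: r => [|i r IH]; first by rewrite big_nil; exact: psd0.
by rewrite big_cons; case: (P i) => //; exact: psdD.
Qed.
Lemma psd_cong (M : 'M[C]_d) A : psdmx A -> psdmx (M *m A *m M^t*).
Proof.
by move=> /psdP hA; apply/psdP => x; rewrite /qform -{1}(trmxCK M) form_cong; apply: hA.
Qed.

Lemma psd_antisym A : psdmx A -> psdmx (- A) -> A = 0.
Proof.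
move=> hA hN; apply/matrixP => i j; rewrite -mulmx_evec psd_qform_eq0 ?mxE //.
have /psdP/(_ (evec j)) := hA; have /psdP/(_ (evec j)) := hN.
by rewrite /qform form_oppmx oppr_ge0 => h1 h2; apply/eqP; rewrite eq_le h1 h2.
Qed.

(* A is dominated by B when A <= c B in the Loewner order for some c >= 0.
   This preorder only sees the kernels of positive matrices (Lemmas
   [dominated_ker] and [dominated_of_ker]), and is preserved by sums and by
   positive linear maps. *)
Definition dominated A B : Prop := exists2 c : C, 0 <= c & psdmx (c *: B - A).

Lemma dominated_refl A : dominated A A.
Proof. by exists 1; [exact: ler01 | rewrite scale1r subrr; exact: psd0]. Qed.

Lemma dominated_trans A B B' : dominated A B -> dominated B B' -> dominated A B'.
Proof.
move=> [c1 c1_ge0 h1] [c2 c2_ge0 h2]; exists (c1 * c2); first exact: mulr_ge0.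
have -> : (c1 * c2) *: B' - A = c1 *: (c2 *: B' - B) + (c1 *: B - A).
  by rewrite scalerBr scalerA addrA subrK.
by apply: psdD => //; apply: psdZ.
Qed.

Lemma dominated_addr A B : psdmx B -> dominated A (A + B).
Proof. by move=> hB; exists 1; [exact: ler01 | rewrite scale1r addrC addKr]. Qed.

Lemma dominated_add A B B' : dominated A B' -> dominated B B' -> dominated (A + B) B'.
Proof.
move=> [c1 c1_ge0 h1] [c2 c2_ge0 h2]; exists (c1 + c2); first exact: addr_ge0.
by rewrite scalerDl opprD addrACA; apply: psdD.
Qed.

Lemma dominated_sum (I : Type) (r : seq I) (G : I -> 'M[C]_d) B :
  psdmx B -> (forall i, dominated (G i) B) -> dominated (\sum_(i <- r) G i) B.
Proof.
move=> hB hG; elim: r => [|i r IH]; last by rewrite big_cons; apply: dominated_add.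
by rewrite big_nil; exists 0; [exact: lexx | rewrite scale0r subrr; exact: psd0].
Qed.

Lemma dominated_eq0 A : psdmx A -> dominated A 0 -> A = 0.
Proof. by move=> hA [c _]; rewrite scaler0 sub0r; apply: psd_antisym. Qed.

Lemma dominated_ker A B x : psdmx A -> dominated A B -> B *m x = 0 -> A *m x = 0.
Proof.
move=> hA [c c_ge0 h] hx; apply: psd_qform_eq0 => //.
have /psdP/(_ x) := h; have /psdP/(_ x) := hA.
rewrite /qform form_addmx form_oppmx form_scalemx {2}/form -mulmxA hx mulmx0 mxE.
by rewrite mulr0 sub0r oppr_ge0 => h1 h2; apply/eqP; rewrite eq_le h1 h2.
Qed.

Lemma diag_coord_bound (v : 'rV[C]_d) x k : (forall l, 0 <= v 0 l) -> v 0 k != 0 ->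
  `|x k 0| ^+ 2 <= (v 0 k)^-1 * qform (diag_mx v) x.
Proof.
move=> hv vk; rewrite -{1}(mulKf vk (`|x k 0| ^+ 2)) ler_wpM2l ?invr_ge0 //.
rewrite qform_diag (bigD1 k) //= normCKC lerDl.
by apply: sumr_ge0 => l _; apply: mulr_ge0 => //; exact: normsq_ge0.
Qed.

Lemma amgm (a b : C) : 0 <= a -> 0 <= b -> a * b <= a ^+ 2 + b ^+ 2.
Proof.
move=> ha hb; rewrite -subr_ge0.
have -> : a ^+ 2 + b ^+ 2 - a * b = (a - b) ^+ 2 + a * b by ring.
by apply: addr_ge0; [rewrite -realEsqr realB // ger0_real | exact: mulr_ge0].
Qed.

(* Domination by a nonnegative diagonal matrix follows from kernel inclusion:
   the entries of A vanish outside the support of v, and Cauchy-type bounds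
   control the remaining ones. *)
Lemma dominated_diag_of_ker (v : 'rV[C]_d) A : (forall k, 0 <= v 0 k) -> psdmx A ->
  (forall x, diag_mx v *m x = 0 -> A *m x = 0) -> dominated A (diag_mx v).
Proof.
move=> hv hA hker.
have col0 i k : v 0 k = 0 -> A i k = 0.
  move=> vk; rewrite -mulmx_evec hker ?mxE //; apply: diag_mul_eq0 => j.
  by have [->|jk] := eqVneq j k; rewrite ?vk ?mul0r // !mxE (negbTE jk) /= !mulr0.
have row0 i k : v 0 k = 0 -> A k i = 0 by move=> vk; rewrite (psd_herm hA) col0 ?rmorph0.
exists (\sum_i \sum_j `|A i j| * ((v 0 i)^-1 + (v 0 j)^-1)).
  by do 2!(apply: sumr_ge0 => ? _); rewrite mulr_ge0 ?addr_ge0 ?invr_ge0.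
apply/psdP => x; rewrite /qform form_addmx form_oppmx form_scalemx subr_ge0.
have hA0 : 0 <= form A x x by have /psdP := hA; apply.
rewrite -(ger0_norm hA0) formE mulr_suml.
apply: (le_trans (ler_norm_sum _ _ _)); apply: ler_sum => i _.
rewrite mulr_suml; apply: (le_trans (ler_norm_sum _ _ _)); apply: ler_sum => j _.
have [->|Aij] := eqVneq (A i j) 0.
  by rewrite mulr0 mul0r normr0 !mul0r.
have vi : v 0 i != 0 by apply: contra Aij => /eqP/(row0 j i)->.
have vj : v 0 j != 0 by apply: contra Aij => /eqP/(col0 i j)->.
rewrite !normrM norm_conjC (mulrC `|x i 0|) -!mulrA ler_wpM2l //.
by apply: (le_trans (amgm _ _)) => //; rewrite mulrDl; apply: lerD; exact: diag_coord_bound.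
Qed.

(* For positive matrices, kernel inclusion implies domination; reduce to the
   diagonal case through the spectral decomposition of B. *)
Lemma dominated_of_ker A B : psdmx A -> psdmx B ->
  (forall x, B *m x = 0 -> A *m x = 0) -> dominated A B.
Proof.
move=> hA hB hker; set V := U B.
have eB : B = V^t* *m diag_mx (D B) *m V := psd_spectral hB.
have [c c_ge0 hc] : dominated (V *m A *m V^t*) (diag_mx (D B)).
  apply: dominated_diag_of_ker; [by move=> k; apply: psd_spectral_ge0 | exact: psd_cong |].
  move=> x hx; rewrite -!mulmxA hker ?mulmx0 //.
  by rewrite eB -!mulmxA (mulmxA V) spectral_mulUUt mul1mx hx mulmx0.
exists c => //; have := psd_cong (V^t*) hc.
rewrite trmxCK mulmxBr mulmxBl -scalemxAr -scalemxAl -eB.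
by rewrite !mulmxA spectral_mulUtU mul1mx -mulmxA spectral_mulUtU mulmx1.
Qed.

Lemma ker_submx A B : (forall x, B *m x = 0 -> A *m x = 0) -> (A <= B)%MS.
Proof.
move=> h; rewrite submxE; apply/eqP/matrixP => i j.
have e : B *m (cokermx B *m evec j) = 0 by rewrite mulmxA mulmx_coker mul0mx.
by rewrite -mulmx_evec -mulmxA h // !mxE.
Qed.

Lemma submx_ker A B x : (A <= B)%MS -> B *m x = 0 -> A *m x = 0.
Proof. by move=> /submxP [M ->] hx; rewrite -mulmxA hx mulmx0. Qed.

(* Domination between positive matrices is reversed as soon as it does not
   increase the rank: the row space can only grow, so it is unchanged. *)
Lemma dominated_rank_eq A B : psdmx A -> psdmx B -> dominated A B ->
  (\rank B <= \rank A)%N -> dominated B A.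
Proof.
move=> hA hB h hr; have sAB := ker_submx (fun x => dominated_ker hA h (x := x)).
have := mxrank_leqif_sup sAB => /leqifP; case: ifP => [sBA _|_ hlt].
  by apply: dominated_of_ker => // x; exact: submx_ker.
by move: hr; rewrite leqNgt hlt.
Qed.

End PositiveMatrices.

Section Paths.
Variable m : nat.
Implicit Type s : nat -> 'I_m.

Definition shift s j : nat -> 'I_m := fun i => s (j + i)%N.
Definition pcons (k : 'I_m) s : nat -> 'I_m := fun i => if i is i'.+1 then s i' else k.

Lemma prefixD s j n : prefix s (j + n) = prefix s j ++ prefix (shift s j) n.
Proof.
rewrite /prefix iotaD map_cat add0n; congr (_ ++ _).
by rewrite -[j in iota j]addn0 iotaDl -map_comp.
Qed.

Lemma prefix_pcons k s n : prefix (pcons k s) n.+1 = k :: prefix s n.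
Proof. by rewrite -add1n prefixD. Qed.

Lemma fair_shift s j : fair s -> fair (shift s j).
Proof.
move=> hs k N; have [n [Nn e]] := hs k (j + N)%N.
have jn : (j <= n)%N := leq_trans (leq_addr N j) Nn.
by exists (n - j)%N; rewrite leq_subRL // /shift subnKC.
Qed.

Lemma perm_enum_full (D : seq 'I_m) : uniq D -> size D = m -> perm_eq D (enum 'I_m).
Proof.
move=> uD sD; have sub : {subset D <= enum 'I_m} by move=> y _; rewrite mem_enum.
have [|_ eqD] := uniq_min_size uD sub; first by rewrite size_enum_ord sD.
exact: uniq_perm uD (enum_uniq _) eqD.
Qed.

Lemma exists_notin (D : seq 'I_m) : (size D < m)%N -> exists k, k \notin D.
Proof.
move=> sD; case: (pickP (predC (mem D))) => [k hk|hD]; first by exists k.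
have sub : {subset enum 'I_m <= D} by move=> x _; apply/negPn; exact: (negbT (hD x)).
by have := uniq_leq_size (enum_uniq _) sub; rewrite size_enum_ord leqNgt sD.
Qed.

Lemma interleave_neq0 (T : eqType) (p : seq T) sig : p != [::] -> interleave p sig != [::].
Proof. by case: p => [//|x [|y ys]]; case: sig. Qed.

End Paths.

Lemma dependent_choice (S : Type) (P : S -> Prop) (R : S -> S -> Prop) (x0 : S) :
  P x0 -> (forall x, P x -> exists y, P y /\ R x y) ->
  exists f : nat -> S, f 0%N = x0 /\ forall i, P (f i) /\ R (f i) (f i.+1).
Proof.
move=> h0 hstep.
have [g hg] : exists g : S -> S, forall x, P x -> P (g x) /\ R x (g x).
  apply: (functional_choice (fun x y => P x -> P y /\ R x y)) => x.
  by case: (classic (P x)) => [/hstep [y hy]|hx]; [exists y | exists x].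
exists (fun i => iter i g x0); split => // i.
have Pi : P (iter i g x0) by elim: i => //= i IH; have [] := hg _ IH.
by split => //; exact: (hg _ Pi).2.
Qed.

Lemma map_nth_iota (T : Type) (x0 : T) (s : seq T) n : (n <= size s)%N ->
  [seq nth x0 s i | i <- iota 0 n] = take n s.
Proof.
move=> hn; apply: (@eq_from_nth _ x0); first by rewrite size_map size_iota size_takel.
move=> i; rewrite size_map size_iota => hi.
by rewrite (nth_map 0%N) ?size_iota // nth_iota // add0n nth_take.
Qed.

Section Concatenation.
Variables (T : Type) (x0 : T) (B : nat -> seq T).
Hypothesis B_nonempty : forall i, (0 < size (B i))%N.

Definition blocks J : seq T := flatten [seq B i | i <- iota 0 J].
Definition concat_blocks (n : nat) : T := nth x0 (blocks n.+1) n.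

Lemma blocksS J : blocks J.+1 = blocks J ++ B J.
Proof. by rewrite /blocks -addn1 iotaD map_cat flatten_cat /= cats0. Qed.

Lemma size_blocks J : (J <= size (blocks J))%N.
Proof. by elim: J => [//|J IH]; rewrite blocksS size_cat -addn1 leq_add. Qed.

Lemma blocks_prefix a b : (a <= b)%N -> exists r, blocks b = blocks a ++ r.
Proof.
move=> /subnKC <-; elim: (b - a)%N => [|k [r e]]; first by exists [::]; rewrite addn0 cats0.
by exists (r ++ B (a + k)%N); rewrite addnS blocksS e catA.
Qed.

Lemma concat_blocks_nth J n : (n < size (blocks J))%N -> concat_blocks n = nth x0 (blocks J) n.
Proof.
move=> hn; have [r1 e1] := blocks_prefix (leq_maxl J n.+1).
have [r2 e2] := blocks_prefix (leq_maxr J n.+1).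
transitivity (nth x0 (blocks (maxn J n.+1)) n); last by rewrite e1 nth_cat hn.
by rewrite e2 nth_cat (leq_trans (ltnSn n) (size_blocks _)).
Qed.

Lemma concat_blocks_prefix n : [seq concat_blocks i | i <- iota 0 n] = take n (blocks n).
Proof.
rewrite -(map_nth_iota x0) ?size_blocks //; apply/eq_in_map => k.
rewrite mem_iota add0n => /andP [_ hk]; apply: concat_blocks_nth.
exact: leq_trans hk (size_blocks n).
Qed.

Lemma concat_blocks_block i :
  [seq concat_blocks j | j <- iota (size (blocks i)) (size (B i))] = B i.
Proof.
rewrite -[in RHS](take_size (B i)) -(map_nth_iota x0) // -[size (blocks i)]addn0 iotaDl -map_comp.
apply/eq_in_map => k; rewrite mem_iota add0n => /andP [_ hk] /=.
rewrite (concat_blocks_nth (J := i.+1)) blocksS ?size_cat ?ltn_add2l //.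
by rewrite nth_cat ltnNge leq_addr /= addKn.
Qed.

End Concatenation.

Section PositiveIteration.
Variables (C : numClosedFieldType) (d m : nat).
Variable F : 'I_m -> 'M[C]_d -> 'M[C]_d.
Hypothesis F_linear : forall k a X Y, F k (a *: X + Y) = a *: F k X + F k Y.
Hypothesis F_psd : forall k X, psdmx X -> psdmx (F k X).
Implicit Types (X Y : 'M[C]_d) (f w : seq 'I_m) (s t : nat -> 'I_m).

Definition Fword f X : 'M[C]_d := foldl (fun X k => F k X) X f.

Lemma Fword_cat f g X : Fword (f ++ g) X = Fword g (Fword f X).
Proof. exact: foldl_cat. Qed.
Lemma Fword_rcons f k X : Fword (rcons f k) X = F k (Fword f X).
Proof. exact: foldl_rcons. Qed.

Lemma Fword_linear f a X Y : Fword f (a *: X + Y) = a *: Fword f X + Fword f Y.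
Proof. by elim: f X Y => [//|k f IH] X Y /=; rewrite F_linear IH. Qed.

Lemma Fword0 f : Fword f 0 = 0.
Proof.
have e := Fword_linear f 1 0 0; rewrite !scale1r addr0 in e.
by apply: (addrI (Fword f 0)); rewrite addr0 -e.
Qed.

Lemma FwordD f X Y : Fword f (X + Y) = Fword f X + Fword f Y.
Proof. by rewrite -[X in X + _]scale1r Fword_linear scale1r. Qed.

Lemma FwordZ f c X : Fword f (c *: X) = c *: Fword f X.
Proof. by rewrite -[c *: X]addr0 Fword_linear Fword0 addr0. Qed.

Lemma FwordB f c X Y : Fword f (c *: X - Y) = c *: Fword f X - Fword f Y.
Proof. by apply: (addIr (Fword f Y)); rewrite -FwordD !subrK FwordZ. Qed.

Lemma Fword_psd f X : psdmx X -> psdmx (Fword f X).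
Proof. by elim: f X => [//|k f IH] X hX /=; apply/IH/F_psd. Qed.

Lemma Fword_dominated f X Y : psdmx X -> dominated X Y -> dominated (Fword f X) (Fword f Y).
Proof. by move=> hX [c c_ge0 h]; exists c => //; rewrite -FwordB; exact: Fword_psd. Qed.

Definition survives X s : Prop := forall n, Fword (prefix s n) X != 0.

Lemma survives_shift X s j : survives X s -> survives (Fword (prefix s j) X) (shift s j).
Proof. by move=> h n; rewrite -Fword_cat -prefixD. Qed.

Lemma survives_neq0 X s : survives X s -> X != 0.
Proof. by move=> h; exact: (h 0%N). Qed.

Lemma survives_pcons k X s : survives (F k X) s -> survives X (pcons k s).
Proof.
move=> h [|n]; last by rewrite prefix_pcons; exact: h.
by apply: contra (h 0%N) => /eqP /= ->; rewrite -[F k 0]/(Fword [:: k] 0) Fword0.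
Qed.

Lemma survives_dominated X Y s : psdmx X -> dominated X Y -> survives X s -> survives Y s.
Proof.
move=> hX hXY h n; apply: contra (h n) => /eqP e; apply/eqP/dominated_eq0.
  exact: Fword_psd.
by rewrite -e; exact: Fword_dominated.
Qed.

Lemma vanishes_later X s n n' : (n <= n')%N -> Fword (prefix s n) X = 0 ->
  Fword (prefix s n') X = 0.
Proof. by move=> /subnKC <- e; rewrite prefixD Fword_cat e Fword0. Qed.

Lemma survives_add X Y s : survives (X + Y) s -> survives X s \/ survives Y s.
Proof.
move=> h; apply: NNPP => /not_or_and [].
move=> /not_all_ex_not [n1 /negP/negPn/eqP e1] /not_all_ex_not [n2 /negP/negPn/eqP e2].
have := h (maxn n1 n2); rewrite FwordD (vanishes_later _ e1) ?leq_maxl //.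
by rewrite (vanishes_later _ e2) ?leq_maxr // addr0 eqxx.
Qed.

Lemma survives_sum (I : Type) (r : seq I) (G : I -> 'M[C]_d) s :
  survives (\sum_(i <- r) G i) s -> exists i, survives (G i) s.
Proof.
elim: r => [|i r IH]; first by rewrite big_nil => /survives_neq0; rewrite eqxx.
by rewrite big_cons => /survives_add [h|/IH //]; exists i.
Qed.

Section ShortWitness.
Variable Y : 'M[C]_d.
Hypothesis Y_psd : psdmx Y.

(* reach j = Y + sum_k F_k Y + ... : up to multiplicities, the sum of F_w Y
   over all words w of length at most j. *)
Definition reach j : 'M[C]_d := iter j (fun X => X + \sum_(k < m) F k X) Y.

Lemma reachS j : reach j.+1 = reach j + \sum_(k < m) F k (reach j).
Proof. by []. Qed.

Lemma reach_psd j : psdmx (reach j).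
Proof. by elim: j => [//|j IH] /=; apply: psdD => //; apply: psd_sum => k; apply: F_psd. Qed.

Lemma dominated_summand X (G : 'I_m -> 'M[C]_d) k :
  psdmx X -> (forall i, psdmx (G i)) -> dominated (G k) (X + \sum_(i < m) G i).
Proof.
move=> hX hG; exists 1; first exact: ler01.
rewrite scale1r (bigD1 k) //= addrCA addrC addrK.
by apply: psdD => //; apply: psd_sum.
Qed.

(* Each F_k is monotone for domination, and F_k (reach j) is part of reach j.+1. *)
Lemma dominated_reach_step j k X : dominated X (reach j) -> psdmx X ->
  dominated (F k X) (reach j.+1).
Proof.
move=> hX X_psd; apply: dominated_trans (Fword_dominated [:: k] X_psd hX) _.
exact: dominated_summand (reach_psd j) (fun i => F_psd i (reach_psd _)).
Qed.

Lemma Fword_dominated_reach w : dominated (Fword w Y) (reach (size w)).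
Proof.
elim/last_ind: w => [|w k IH]; first exact: dominated_refl.
by rewrite Fword_rcons size_rcons; apply: dominated_reach_step => //; exact: Fword_psd.
Qed.

Lemma survives_reach j t : survives (reach j) t ->
  exists2 w, (size w <= j)%N & survives (Fword w Y) t.
Proof.
elim: j t => [|j IH] t /=; first by exists [::].
case/survives_add => [/IH [w hw h]|/survives_sum [k /survives_pcons /IH [w hw h]]].
  by exists w => //; apply: leqW.
exists (rcons w k); first by rewrite size_rcons.
by move=> n; rewrite Fword_rcons; have := h n.+1; rewrite prefix_pcons.
Qed.

Lemma reach_mono i j : (i <= j)%N -> dominated (reach i) (reach j).
Proof.
move=> /subnKC <-; elim: (j - i)%N => [|n IH]; first by rewrite addn0; apply: dominated_refl.
rewrite addnS reachS; apply: dominated_trans IH (dominated_addr _ _).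
by apply: psd_sum => k; apply: F_psd; exact: reach_psd.
Qed.

Lemma reach_stable i : dominated (reach i.+1) (reach i) ->
  forall n, dominated (reach (i + n)) (reach i).
Proof.
move=> h n; have step n' : dominated (reach (i + n').+1) (reach (i + n')).
  elim: n' => [|n' IH]; rewrite ?addn0 // addnS [reach (i + n').+2]reachS.
  apply: dominated_add; first exact: dominated_refl.
  apply: dominated_sum; first exact: reach_psd.
  by move=> k; apply: dominated_reach_step => //; exact: reach_psd.
elim: n => [|n IH]; first by rewrite addn0; apply: dominated_refl.
by rewrite addnS; apply: dominated_trans (step n) IH.
Qed.

(* The ranks of reach 0, reach 1, ... increase strictly until reach
   stabilizes, so it has stabilized at index d - 1. *)
Lemma reach_bounded : Y != 0 -> forall j, dominated (reach j) (reach d.-1).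
Proof.
move=> Y_neq0.
have [i id Pi] : exists2 i, (i < d)%N & dominated (reach i.+1) (reach i).
  apply: NNPP => hn.
  have rank_gt j : (j <= d)%N -> (j < \rank (reach j))%N.
    elim: j => [_|j IH jd] /=; first by rewrite lt0n mxrank_eq0.
    apply: (leq_ltn_trans (IH (ltnW jd))); rewrite ltnNge; apply/negP => hle; apply: hn.
    have grow := reach_mono (leqnSn j).
    by exists j => //; apply: dominated_rank_eq (reach_psd _) (reach_psd _) grow hle.
  by have := rank_gt d (leqnn d); rewrite ltnNge rank_leq_row.
move=> j; have [jd|dj] := leqP j d.-1; first exact: reach_mono.
have id' : (i <= d.-1)%N by rewrite -ltnS prednK // (leq_ltn_trans _ id).
have ij : (i <= j)%N := leq_trans id' (ltnW dj).
apply: dominated_trans (reach_mono id').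
by have := reach_stable Pi (j - i); rewrite subnKC.
Qed.

Lemma short_witness tau t : (0 < d)%N -> survives (Fword tau Y) t ->
  exists2 w, (size w < d)%N & survives (Fword w Y) t.
Proof.
move=> d_gt0 h.
have Y_neq0 : Y != 0 by apply: contra (survives_neq0 h) => /eqP ->; rewrite Fword0.
have dom := dominated_trans (Fword_dominated_reach tau) (reach_bounded Y_neq0 _).
have [w hw h'] := survives_reach (survives_dominated (Fword_psd tau Y_psd) dom h).
by exists w => //; rewrite (leq_ltn_trans hw) // prednK.
Qed.

End ShortWitness.

(* Along a fair path t on which Y survives, greedily
   build s_1 sigma_1 s_2 ... s_m: s_1 = t_0, then jump to the next occurrence
   of a letter not yet used; the word skipped in between is replaced by a
   surviving word of length < d given by [short_witness]. [D] records the
   letters already used. *)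
Lemma pi_block_from (D : seq 'I_m) n Y t : (0 < d)%N -> uniq D -> t 0%N \notin D ->
  (size D + n.+1)%N = m -> psdmx Y -> fair t -> survives Y t ->
  exists p sig t', [/\ perm_eq (D ++ p) (enum 'I_m), size sig = n,
    all (fun σ => size σ < d)%N sig, p != [::] &
    fair t' /\ survives (Fword (interleave p sig) Y) t'].
Proof.
move=> d_gt0; elim: n D Y t => [|n IH] D Y t uD tD hsize hY ft h.
  exists [:: t 0%N], [::], (shift t 1); split => //.
    apply: perm_enum_full; first by rewrite cats1 rcons_uniq tD.
    by rewrite size_cat /=; lia.
  by split; [exact: fair_shift | exact: (survives_shift 1 h)].
set D' := D ++ [:: t 0%N].
have uD' : uniq D' by rewrite cat_uniq uD /= orbF tD.
have [k kD'] : exists k, k \notin D' by apply: exists_notin; rewrite size_cat /=; lia.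
have [j [j_ge1 tj]] := ft k 1%N.
have := survives_shift j h; rewrite -(subnKC j_ge1) prefixD Fword_cat.
move=> /(short_witness (F_psd (t 0%N) hY) d_gt0) [w hw hw_surv].
have := IH D' _ _ uD' _ _ (Fword_psd w (F_psd (t 0%N) hY)) (fair_shift _ ft) hw_surv.
case=> [||p [sig [t' [hp hsig hall hp0 [ft' h']]]]].
- by rewrite /shift addn0 subnKC // tj.
- by rewrite size_cat /=; lia.
exists (t 0%N :: p), (w :: sig), t'; split => //=.
- by rewrite -cat1s catA.
- by rewrite hsig.
- by rewrite hw.
by case: p hp0 h' {hp} => [//|y ys] _; rewrite /= Fword_cat.
Qed.

Lemma pi_block Y t : (0 < d)%N -> psdmx Y -> fair t -> survives Y t ->
  exists b t', [/\ inPi d b, b != [::], fair t' & survives (Fword b Y) t'].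
Proof.
move=> d_gt0 hY ft h; have m_gt0 : (0 < m)%N by case: (t 0%N) => x; apply: leq_ltn_trans.
have [p [sig [t' [hp hsig hall hp0 [ft' h']]]]] :=
  pi_block_from (D := [::]) (n := m.-1) d_gt0 isT isT (prednK m_gt0) hY ft h.
by exists (interleave p sig), t'; split => //; [exists p, sig | exact: interleave_neq0].
Qed.

Lemma pi_path Y t : (0 < d)%N -> psdmx Y -> fair t -> survives Y t ->
  exists2 pi, inPiomega d pi & survives Y pi.
Proof.
move=> d_gt0 hY ft h.
(* A state is (last block, current matrix, current fair path). *)
pose good (st : seq 'I_m * ('M[C]_d * (nat -> 'I_m))) :=
  [/\ psdmx st.2.1, fair st.2.2 & survives st.2.1 st.2.2].
pose next (st st' : seq 'I_m * ('M[C]_d * (nat -> 'I_m))) :=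
  [/\ inPi d st'.1, st'.1 != [::] & st'.2.1 = Fword st'.1 st.2.1].
have [f [f0 hf]] : exists f : nat -> _, f 0%N = ([::], (Y, t)) /\
    forall i, good (f i) /\ next (f i) (f i.+1).
  apply: dependent_choice => [|[b [X s]] [hX fs hs]]; first by split.
  have [b' [t' [hb' b'_neq0 ft' hs']]] := pi_block d_gt0 hX fs hs.
  by exists (b', (Fword b' X, t')); split; [split => //; exact: Fword_psd|].
pose B i := (f i.+1).1.
have B_nonempty i : (0 < size (B i))%N by rewrite lt0n size_eq0; have [_ []] := hf i.
have reached J : Fword (blocks B J) Y = (f J).2.1.
  elim: J => [|J IH]; first by rewrite f0.
  by rewrite blocksS Fword_cat IH; have [_ [_ _ ->]] := hf J.
exists (concat_blocks (t 0%N) B).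
  exists (fun i => size (blocks B i)); split => // i.
  rewrite blocksS size_cat addKn -{1}[size (blocks B i)]addn0 ltn_add2l B_nonempty.
  by rewrite concat_blocks_block //; have [_ []] := hf i.
move=> n; apply/negP => /eqP e.
have [[_ _ /survives_neq0 nz] _] := hf n; move: nz; rewrite -reached.
rewrite -(cat_take_drop n (blocks B n)) Fword_cat -(concat_blocks_prefix (t 0%N) B_nonempty).
by rewrite -[map _ _]/(prefix _ n) e Fword0 eqxx.
Qed.

End PositiveIteration.

(* Every letter occurs in each block of Pi, hence infinitely often in a path
   of Pi^omega. *)
Lemma mem_interleave (T : eqType) (p : seq T) sig x : x \in p -> x \in interleave p sig.
Proof.
elim: p sig => [//|y ys IH] [//|s ss] /=.
case: ys IH => [//|z zs] IH; rewrite !inE => /orP [->//|hx].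
by rewrite mem_cat IH ?orbT.
Qed.

Lemma piomega_fair d m (s : nat -> 'I_m) : inPiomega d s -> fair s.
Proof.
move=> [c [c0 hc]] k N.
have c_ge i : (i <= c i)%N by elim: i => [|i IH]; rewrite ?c0 // (leq_ltn_trans IH (hc i).1).
have [p [sig [hp _ _ e]]] := (hc N).2.
have : k \in [seq s j | j <- iota (c N) (c N.+1 - c N)].
  by rewrite e mem_interleave // (perm_mem hp) mem_enum.
case/mapP => j; rewrite mem_iota => /andP [h1 _] ->.
by exists j; split => //; apply: leq_trans (c_ge N) h1.
Qed.

(* Complete positivity at level 1: super-operators map positive matrices to
   positive matrices. *)
Lemma cp_psd (C : numClosedFieldType) d (E : 'M[C]_d -> 'M[C]_d) :
  completely_positive E -> forall A, psdmx A -> psdmx (E A).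
Proof.
have sum_pair1 (G : 'I_1 * 'I_d -> C) : \sum_a G a = \sum_i G (ord0, i).
  rewrite (eq_bigr (fun p => G (p.1, p.2))); last by case.
  by rewrite -(pair_bigA _ (fun u i => G (u, i))) big_ord1.
move=> hE A hA w; have := hE 1%N (fun _ _ => A) => /(_ _ (fun a => w a.2)).
rewrite sum_pair1; under eq_bigr do rewrite sum_pair1 /=; apply.
move=> v; rewrite sum_pair1; under eq_bigr do rewrite sum_pair1 /=.
exact: (hA (fun i => v (ord0, i))).
Qed.

Theorem mainTheorem5 (C : numClosedFieldType) (d : nat) (hd : (0 < d)%N)
  (m : nat) (E : 'I_m -> {linear 'M[C]_d -> 'M[C]_d})
  (hE : forall k : 'I_m, superop (E k) /\ trace_preserving (E k))
  (M0 M1 : 'M[C]_d)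
  (hM : adjmx M0 *m M0 + adjmx M1 *m M1 = 1%:M)
  (rho0 : 'M[C]_d) (hrho : density rho0) :
  terminates_in (fun k => E k) M1 rho0 (@fair m) <->
  terminates_in (fun k => E k) M1 rho0 (@inPiomega d m).
Proof.
set F := Fk (fun k => E k) M1.
have F_linear k a X Y : F k (a *: X + Y) = a *: F k X + F k Y.
  by rewrite /F /Fk mulmxDr mulmxDl -scalemxAr -scalemxAl linearP.
have F_psd k X : psdmx X -> psdmx (F k X).
  move=> hX; apply: cp_psd (hE k).1.1 _ _.
  by rewrite /adjmx map_trmx; exact: psd_cong.
have terminatesP s : terminates_for (fun k => E k) M1 rho0 s <-> ~ survives F rho0 s.
  split=> [[n [_ /eqP e]] h| h]; first by have := h n; rewrite /Fword e.
  have [n /negP/negPn/eqP e] := not_all_ex_not _ _ h.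
  exists n.+1; split => //; apply: (vanishes_later F_linear (leqnSn n) e).
split=> [H s /piomega_fair/H //|H s fs].
apply/terminatesP => h.
have [pi pi_in pi_surv] := pi_path F_linear F_psd hd hrho.1 fs h.
by have /terminatesP := H pi pi_in.
Qed.
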